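(* Let $G$ be labeled by an $\mathcal{AL}$ labeling $\langle r,d_1,d_2\rangle$, and let $x$ be a black node that belongs to class $B$, $C$, or $D$. Then $\mathit{Is\_B}(x)$ returns ``$B$'' iff $x$ is in class $B$, and returns ``$D$'' iff $x$ is in class $D$ and is not a $\mathbf{B}$-node. The robot is in node $x$ when $\mathit{Is\_B}(x)$ exits. In the call $\mathit{Is\_B}(x)$ the robot needs $O(d_1\log\Delta)$ bits of memory, and the total number of edge traversals is $O(\Delta^{d_1+2})$.
   Context: $G$ is an undirected connected anonymous graph (loops and multiple edges allowed) of maximum degree $\Delta$ and diameter $D$, with ports $0,\dots,\mathtt{deg}(v)-1$ at each node $v$; the robot sees the degree, the color of the current node and the entry port and moves by choosing exit ports. $\mathcal{AL}$ labeling $\langle r,d_1,d_2\rangle$: root $r$; $d(\cdot,\cdot)$ graph distance; integers $d_1\ge 2$, $d_2$ with $\lfloor d_2/2\rfloor\ge d_1$; $q=d_1+d_2+2$; classes $C=\{v:d(r,v)\bmod q=0\}$, $D=\{v:d(r,v)\bmod q=1\}$, $A=\{v:d(r,v)\bmod q=d_2+1\}$, $B=\{v:d(r,v)\bmod q=d_1+d_2+1\}$; nodes of $A\cup B\cup C\cup D$ are black, others white; it is assumed $D\ge d_1+d_2+1$. A $\mathbf{B}$-node is a black node all of whose neighbors are black. White local search from $u$ within radius $\ell$: the recursive procedure $\mathit{WLS}(v,k,\mathit{inport})$, called as $\mathit{WLS}(u,\ell,-1)$: if $k=0$ report $v$; otherwise, if $v$ is black and $k\ne\ell$, return; otherwise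 for each port $\mathit{outport}\neq\mathit{inport}$ of $v$ in increasing order, move through it to neighbor $w$, call $\mathit{WLS}(w,k-1,\text{entry port at }w)$, and move back to $v$. Procedure $\mathit{Is\_B}(x)$: if $x$ is a $\mathbf{B}$-node, return ``$\mathbf{B}$-node''. Otherwise perform a white local search from $x$ within radius $d_1$; as soon as a reported node $y$ is black and has no $\mathbf{B}$-node neighbor, return (to $x$ and output) ``$B$''; if no such $y$ is reported (or no node is reported), return ``$D$''. *)

From mathcomp Require Import all_boot.
Set Implicit Arguments.
Unset Strict Implicit.
Unset Printing Implicit Defensive.

(* Anonymous port-labeled graphs (loops and multiple edges allowed). *)
(* Ports at v are 0 .. deg v - 1; nbr v i is the node reached through *)
(* port i of v, and eport v i the port number at which it is entered. *)
Record pgraph (V : finType) := PGraph {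
  deg : V -> nat;
  nbr : V -> nat -> V;
  eport : V -> nat -> nat;
  eport_lt : forall v i, i < deg v -> eport v i < deg (nbr v i);
  nbr_back : forall v i, i < deg v -> nbr (nbr v i) (eport v i) = v;
  eport_back : forall v i, i < deg v -> eport (nbr v i) (eport v i) = i;
  (* a loop occupies two distinct ports *)
  loop_ports : forall v i, i < deg v -> nbr v i = v -> eport v i != i
}.

Section Graph.
Variables (V : finType) (G : pgraph V).

Fixpoint ball (k : nat) (u : V) : {set V} :=
  match k with
  | 0 => [set u]
  | k'.+1 => let B := ball k' u in
      B :|: [set w | [exists v in B, [exists i : 'I_(deg G v), nbr G v i == w]]]
  end.

Definition connected : Prop := forall u v, exists k, v \in ball k u.

(* graph distance (correct for connected graphs, where it is < #|V|) *)
Definition dist (u v : V) : nat := find (fun k => v \in ball k u) (iota 0 #|V|).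

Definition diam : nat := \max_(u : V) \max_(v : V) dist u v.
Definition maxdeg : nat := \max_(v : V) deg G v.

Variables (r : V) (d1 d2 : nat).
Definition qAL := d1 + d2 + 2.
Definition inC (v : V) := dist r v %% qAL == 0.
Definition inD (v : V) := dist r v %% qAL == 1.
Definition inA (v : V) := dist r v %% qAL == d2 + 1.
Definition inB (v : V) := dist r v %% qAL == d1 + d2 + 1.
Definition black (v : V) := [|| inA v, inB v, inC v | inD v].
Definition ports (v : V) := iota 0 (deg G v).
Definition Bnode (v : V) := black v && all (fun p => black (nbr G v p)) (ports v).

(* checking whether v is a B-node: visit every neighbour and come back *)
Definition Bnode_test (v : V) : seq nat * bool :=
  (flatten [seq [:: p; eport G v p] | p <- ports v], Bnode v).

Definition hasBnbr_test (v : V) : seq nat * bool :=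
  (flatten [seq p :: (Bnode_test (nbr G v p)).1 ++ [:: eport G v p] | p <- ports v],
   has (fun p => (Bnode_test (nbr G v p)).2) (ports v)).

Definition report_test (y : V) : seq nat * bool :=
  if black y then ((hasBnbr_test y).1, ~~ (hasBnbr_test y).2) else ([::], false).

Fixpoint scan (ps : seq nat) (f : nat -> seq nat * bool) : seq nat * bool :=
  match ps with
  | [::] => ([::], false)
  | p :: ps' => let m := f p in
      if m.2 then (m.1, true)
      else let m' := scan ps' f in (m.1 ++ m'.1, m'.2)
  end.

(* WLS(v, k, inport) within radius l, with early exit on success; the
   result is (sequence of exit ports taken, success flag) *)
Fixpoint wls (l k : nat) (v : V) (inport : option nat) : seq nat * bool :=
  match k with
  | 0 => report_test v
  | k'.+1 =>
      if black v && (k != l) then ([::], false)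
      else scan [seq p <- ports v | Some p != inport]
             (fun p => let m := wls l k' (nbr G v p) (Some (eport G v p)) in
                       (p :: m.1 ++ [:: eport G v p], m.2))
  end.

Inductive answer := Ans_Bnode | Ans_B | Ans_D.

Definition IsB (x : V) : seq nat * answer :=
  if (Bnode_test x).2 then ((Bnode_test x).1, Ans_Bnode)
  else let m := wls d1 d1 x None in
       ((Bnode_test x).1 ++ m.1, if m.2 then Ans_B else Ans_D).

End Graph.

Definition walk_end (V : finType) (G : pgraph V) (v : V) (ms : seq nat) : V :=
  foldl (fun w p => nbr G w p) v ms.

(* The memory content is a natural number (a binary string); at each step
   the robot sees its memory, the degree, the colour (black?) of the
   current node and the entry port (None at start), and either moves
   through an exit port or halts with an answer.  Initial memory is 0. *)
Inductive action := Move of nat | Halt of answer.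
Record robot := Robot { rstep : nat -> nat -> bool -> option nat -> nat * action }.

Definition bits (s : nat) : nat := up_log 2 s.+1.

(* run for at most [fuel] steps: (exit ports taken, answer if halted,
   final node, maximal number of memory bits used) *)
Fixpoint run (V : finType) (G : pgraph V) (col : V -> bool) (R : robot)
    (fuel : nat) (v : V) (inp : option nat) (s : nat)
    : seq nat * option answer * V * nat :=
  match fuel with
  | 0 => ([::], None, v, bits s)
  | f.+1 =>
      let st := rstep R s (deg G v) (col v) inp in
      match st.2 with
      | Halt a => ([::], Some a, v, maxn (bits s) (bits st.1))
      | Move p =>
          if p < deg G v then
            let '(ms, o, w, b) := run G col R f (nbr G v p) (Some (eport G v p)) st.1 in
            (p :: ms, o, w, maxn (bits s) b)
          else ([::], None, v, bits s)
      end
  end.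

From mathcomp Require Import all_boot zify.
Set Implicit Arguments. Unset Strict Implicit. Unset Printing Implicit Defensive.

(* Class-C nodes are B-nodes, while the parent of a class-A or class-B node
   is white.  From a class-B node the white local search climbs d1 white
   levels towards the root and reports a class-A node, which has no B-node
   neighbour; from a class-D node it stays among the white levels above it
   and can only report class-D nodes, whose parent (in class C) is a B-node.
   The robot runs the procedure as a finite-state machine whose memory holds
   the current phase and the stack of at most d1 ports leading back to x,
   encoded in O(d1 log Δ) bits; the search tree has depth d1 and branching at
   most Δ, whence O(Δ^(d1+2)) moves. *)

Definition pair2 (a b : nat) : nat := 2 ^ a * (2 * b).+1.
Definition unpair2 (x : nat) : nat * nat := (logn 2 x, (x %/ 2 ^ logn 2 x)./2).

Lemma pair2_gt0 a b : 0 < pair2 a b.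
Proof. by rewrite muln_gt0 expn_gt0. Qed.

Lemma pair2K a b : unpair2 (pair2 a b) = (a, b).
Proof.
have log_pair : logn 2 (pair2 a b) = a.
  rewrite lognM ?expn_gt0 // pfactorK // logn_coprime ?addn0 //.
  by rewrite coprime_sym coprimen2 /= oddM.
rewrite /unpair2 log_pair mulKn ?expn_gt0 // mul2n.
by rewrite -uphalfE uphalf_double.
Qed.

Lemma pair2_lt a b m : b < 2 ^ m -> pair2 a b < 2 ^ (a + m.+1).
Proof. by move=> bm; rewrite /pair2 expnD ltn_pmul2l ?expn_gt0 // expnS; lia. Qed.

Fixpoint from_digits (B : nat) (l : seq nat) : nat :=
  if l is e :: l' then e + B * from_digits B l' else 0.

Fixpoint to_digits (B n x : nat) : seq nat :=
  if n is n'.+1 then x %% B :: to_digits B n' (x %/ B) else [::].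

Section Digits.
Variables (B : nat) (l : seq nat).
Hypothesis digits_lt : all (fun e => e < B) l.

Lemma from_digitsK : to_digits B (size l) (from_digits B l) = l.
Proof.
elim: l digits_lt => //= e l' IH /andP[eB l'B].
have B_gt0 : 0 < B by apply: leq_ltn_trans eB.
by rewrite addnC mulnC modnMDl modn_small // divnMDl // divn_small // addn0 IH.
Qed.

Lemma from_digits_lt : from_digits B l < B ^ size l.
Proof.
elim: l digits_lt => [|e l' IH] /=; first by rewrite expn0.
move=> /andP[eB /IH l'B]; rewrite expnS.
apply: (@leq_trans (B * (from_digits B l').+1)); first by rewrite mulnS; lia.
by rewrite leq_mul2l l'B orbT.
Qed.

End Digits.

(* A list is stored with the width of its largest entry, so that the code of a
   list of [n] entries below [K] has [O (n log K)] bits whatever [K] is. *)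
Definition digit_width (l : seq nat) : nat := \max_(e <- l) up_log 2 e.+1.

Definition encode_seq (l : seq nat) : nat :=
  let w := digit_width l in pair2 (size l) (pair2 w (from_digits (2 ^ w) l)).

Definition decode_seq (x : nat) : seq nat :=
  let: (n, y) := unpair2 x in let: (w, z) := unpair2 y in to_digits (2 ^ w) n z.

Lemma digit_widthP l : all (fun e => e < 2 ^ digit_width l) l.
Proof.
apply/allP=> e el; apply: leq_trans (@up_logP 2 e.+1 isT) _.
rewrite leq_exp2l //; exact: leq_bigmax_seq.
Qed.

Lemma digit_width_le l K : all (fun e => e < K) l -> digit_width l <= up_log 2 K.
Proof. by move=> /allP lK; apply/bigmax_leqP_seq => e el _; apply/leq_up_log/lK. Qed.

Lemma encode_seqK : cancel encode_seq decode_seq.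
Proof. by move=> l; rewrite /decode_seq !pair2K from_digitsK // digit_widthP. Qed.

Lemma encode_seq_gt0 l : 0 < encode_seq l.
Proof. exact: pair2_gt0. Qed.

Lemma bits_encode_seq l : bits (encode_seq l) <= size l + digit_width l * (size l).+1 + 2.
Proof.
apply: up_log_min => //; set w := digit_width l.
have := from_digits_lt (digit_widthP l); rewrite -expnM => /(pair2_lt w).
move/(pair2_lt (size l)) => /leq_trans; apply; rewrite leq_exp2l // mulnS; lia.
Qed.

(* During the B-node test of [x] the robot is at a
   neighbour of [x] ([OutX]) or back at [x] ([AtX]); during the white local
   search it has just moved down ([Down]) or back up ([Up]) one level; while
   testing a reported node [y] it is at a neighbour [w] of [y] ([OutY]), at a
   neighbour of [w] ([OutW]), back at [w] ([AtW]) or back at [y] ([AtY]).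
   The stacks hold the ports leading back towards [x]; [e] is the port of [w]
   leading back to [y]; the booleans accumulate the tests performed so far. *)
Inductive phase :=
  | Start
  | OutX of bool
  | AtX of bool
  | Down of seq nat
  | Up of bool & seq nat
  | OutY of bool & seq nat
  | OutW of bool & bool & nat & seq nat
  | AtW of bool & bool & nat & seq nat
  | AtY of bool & seq nat.

Definition phase_header (s : phase) : seq nat :=
  match s with
  | Start => [:: 0; 0; 0; 0]
  | OutX a => [:: 1; nat_of_bool a; 0; 0]
  | AtX a => [:: 2; nat_of_bool a; 0; 0]
  | Down _ => [:: 3; 0; 0; 0]
  | Up res _ => [:: 4; nat_of_bool res; 0; 0]
  | OutY h _ => [:: 5; nat_of_bool h; 0; 0]
  | OutW h a e _ => [:: 6; nat_of_bool h; nat_of_bool a; e]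
  | AtW h a e _ => [:: 7; nat_of_bool h; nat_of_bool a; e]
  | AtY h _ => [:: 8; nat_of_bool h; 0; 0]
  end.

Definition phase_stack (s : phase) : seq nat :=
  match s with
  | Start | OutX _ | AtX _ => [::]
  | Down stk | Up _ stk | OutY _ stk | OutW _ _ _ stk | AtW _ _ _ stk | AtY _ stk => stk
  end.

Definition phase_code (s : phase) : seq nat := phase_header s ++ phase_stack s.

Lemma size_phase_code s : size (phase_code s) = 4 + size (phase_stack s).
Proof. by case: s. Qed.

Definition code_phase (l : seq nat) : phase :=
  if l is t :: b1 :: b2 :: e :: stk then
    let h := b1 != 0 in let a := b2 != 0 in
    match t with
    | 1 => OutX h | 2 => AtX h | 3 => Down stk | 4 => Up h stk | 5 => OutY h stk
    | 6 => OutW h a e stk | 7 => AtW h a e stk | 8 => AtY h stk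
    | _ => Start end
  else Start.

Lemma phase_codeK : cancel phase_code code_phase.
Proof. by case=> [|[]|[]|?|[] ?|[] ?|[] [] ? ?|[] [] ? ?|[] ?]. Qed.

Definition free_ports (ex : option nat) (dg i : nat) : seq nat :=
  [seq p <- iota i (dg - i) | Some p != ex].

Definition next_port (ex : option nat) (dg i : nat) : option nat :=
  ohead (free_ports ex dg i).

Lemma free_ports_cons ex n i p l : free_ports ex n i = p :: l ->
  [/\ p < n, Some p != ex & l = free_ports ex n p.+1].
Proof.
rewrite /free_ports; move def_m: (n - i) => m; elim: m i def_m => [|m IH] i def_m //=.
case: ifP => [ne [<- <-]|_]; last by apply: IH; lia.
by split => //; [lia | congr filter; congr iota; lia].
Qed.

(* An empty stack means the robot is back at [x]. *)
Definition ascend (res : bool) (stk : seq nat) : phase * action :=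
  if stk is e :: stk' then (Up res stk', Move e)
  else (Start, Halt (if res then Ans_B else Ans_D)).

Definition IsB_step (d1 : nat) (s : phase) (dg : nat) (c : bool) (inp : option nat)
    : phase * action :=
  let i := odflt 0 inp in
  match s with
  | Start => if 0 < dg then (OutX c, Move 0)
             else (Start, Halt (if c then Ans_Bnode else Ans_D))
  | OutX a => (AtX (a && c), Move i)
  | AtX a => if i.+1 < dg then (OutX a, Move i.+1)
             else if a then (Start, Halt Ans_Bnode) else (Down [::], Move 0)
  | Down stk =>
      if size stk + 1 == d1 then
        (if c then (OutY false (i :: stk), Move 0) else (Up false stk, Move i))
      else if c then (Up false stk, Move i)
      else if next_port (Some i) dg 0 is Some p then (Down (i :: stk), Move p)
      else (Up false stk, Move i)
  | Up res stk =>
      if res then ascend true stk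
      else if next_port (ohead stk) dg i.+1 is Some p then (Down stk, Move p)
      else ascend false stk
  | OutY h stk => (OutW h c i stk, Move 0)
  | OutW h a e stk => (AtW h (a && c) e stk, Move i)
  | AtW h a e stk => if i.+1 < dg then (OutW h a e stk, Move i.+1)
                     else (AtY (h || a) stk, Move e)
  | AtY h stk => if i.+1 < dg then (OutY h stk, Move i.+1) else ascend (~~ h) stk
  end.

(* The initial memory content [0] is not a code, and is read as [Start]. *)
Definition load_phase (s : nat) : phase :=
  if s == 0 then Start else code_phase (decode_seq s).

Definition IsB_robot (d1 : nat) : robot :=
  Robot (fun s dg c inp => let st := IsB_step d1 (load_phase s) dg c inp in
                           (encode_seq (phase_code st.1), st.2)).

Lemma load_phaseK s : load_phase (encode_seq (phase_code s)) = s.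
Proof. by rewrite /load_phase gtn_eqF ?encode_seq_gt0 // encode_seqK phase_codeK. Qed.

Lemma iota0S n : 0 < n -> iota 0 n = 0 :: iota 1 n.-1.
Proof. by case: n. Qed.

Lemma foldl_andb (P : nat -> bool) a l : foldl (fun a j => a && P j) a l = a && all P l.
Proof. by elim: l a => /= [a|j l IH a]; rewrite ?andbT // IH andbA. Qed.

Lemma foldl_orb (P : nat -> bool) h l : foldl (fun h j => h || P j) h l = h || has P l.
Proof. by elim: l h => /= [h|j l IH h]; rewrite ?orbF // IH orbA. Qed.

Lemma scan_success (ps : seq nat) f : (scan ps f).2 = has (fun p => (f p).2) ps.
Proof. by elim: ps => //= p ps IH; case: ((f p).2). Qed.

Lemma IsBE (V : finType) (G : pgraph V) r d1 d2 x : IsB G r d1 d2 x =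
  if Bnode G r d1 d2 x then ((Bnode_test G r d1 d2 x).1, Ans_Bnode)
  else ((Bnode_test G r d1 d2 x).1 ++ (wls G r d1 d2 d1 d1 x None).1,
        if (wls G r d1 d2 d1 d1 x None).2 then Ans_B else Ans_D).
Proof. by []. Qed.

Section Balls.
Variables (V : finType) (G : pgraph V).
Local Notation ball := (ball G).
Local Notation dist := (dist G).

Lemma ballS k u : ball k.+1 u = ball k u :|:
  [set w | [exists v in ball k u, [exists i : 'I_(deg G v), nbr G v i == w]]].
Proof. by []. Qed.

Lemma subset_ballS k u : ball k u \subset ball k.+1 u.
Proof. by rewrite ballS subsetUl. Qed.

Lemma subset_ball k k' u : k <= k' -> ball k u \subset ball k' u.
Proof.
move=> le_kk'; rewrite -(subnKC le_kk'); elim: (k' - k) => [|j IH]; first by rewrite addn0.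
by apply: subset_trans IH _; rewrite addnS subset_ballS.
Qed.

Lemma ball_nbr k u v i : v \in ball k u -> i < deg G v -> nbr G v i \in ball k.+1 u.
Proof.
move=> vB ltid; rewrite ballS in_setU inE; apply/orP; right.
by apply/existsP; exists v; rewrite vB /=; apply/existsP; exists (Ordinal ltid).
Qed.

Lemma ballSP k u w : w \in ball k.+1 u ->
  w \in ball k u \/ exists v i, [/\ v \in ball k u, i < deg G v & nbr G v i = w].
Proof.
rewrite ballS in_setU => /orP[wB|]; first by left.
rewrite inE => /existsP[v /andP[vB /existsP[i /eqP vi_w]]].
by right; exists v, (nat_of_ord i).
Qed.

Lemma ball_stable k u : ball k.+1 u = ball k u -> forall j, ball (k + j) u = ball k u.
Proof.
move=> stable; elim=> [|j IH]; first by rewrite addn0.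
by rewrite addnS ballS IH -ballS stable.
Qed.

Lemma ball_grows u k : k < #|ball k u| \/ exists2 k0, k0 <= k & ball k0.+1 u = ball k0 u.
Proof.
elim: k => [|k [IH|[k0 le_k0k stable]]]; first by left; rewrite /= cards1.
- case: (ltnP #|ball k u| #|ball k.+1 u|) => grow; first by left; apply: leq_trans grow.
  by right; exists k => //; apply/esym/eqP; rewrite eqEcard subset_ballS grow.
- by right; exists k0 => //; apply: leq_trans le_k0k _.
Qed.

Lemma ball_small_radius u v k : v \in ball k u -> exists2 k', k' < #|V| & v \in ball k' u.
Proof.
move=> vB; case: (ltnP k #|V|) => ltkV; first by exists k.
have V_gt0 : 0 < #|V| by apply/card_gt0P; exists u.
exists #|V|.-1; first by rewrite prednK.
case: (ball_grows u #|V|.-1) => [big|[k0 le_k0 stable]].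
  have /eqP -> : ball #|V|.-1 u == setT by rewrite eqEcard subsetT cardsT -(prednK V_gt0).
  by rewrite inE.
apply: (subsetP (subset_ball u le_k0)); rewrite -(ball_stable stable (k - k0)) subnKC //.
by apply: leq_trans le_k0 _; apply: leq_trans ltkV; exact: leq_pred.
Qed.

Lemma dist_leq u v k : v \in ball k u -> dist u v <= k.
Proof.
move=> vB; rewrite /dist; case: (ltnP k #|V|) => ltkV.
  by rewrite leqNgt; apply/negP => /(before_find 0); rewrite nth_iota // add0n vB.
by apply: leq_trans (find_size _ _) _; rewrite size_iota.
Qed.

Hypothesis G_connected : connected G.

Lemma ball_dist u v : v \in ball (dist u v) u.
Proof.
have [k vB] := G_connected u v; have [k' ltk'V vB'] := ball_small_radius vB.
have hasB : has (fun k => v \in ball k u) (iota 0 #|V|).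
  by apply/hasP; exists k' => //; rewrite mem_iota.
move: (hasB) => /(nth_find 0); rewrite nth_iota ?add0n //.
by move: hasB; rewrite has_find size_iota.
Qed.

Lemma dist_nbr_leq u v i : i < deg G v -> dist u (nbr G v i) <= (dist u v).+1.
Proof. by move=> ltid; apply/dist_leq/ball_nbr/ltid/ball_dist. Qed.

Lemma dist_leq_nbr u v i : i < deg G v -> dist u v <= (dist u (nbr G v i)).+1.
Proof. by move=> ltid; rewrite -{1}(nbr_back ltid); apply/dist_nbr_leq/eport_lt. Qed.

Lemma dist_parent u v : 0 < dist u v ->
  exists2 i, i < deg G v & dist u (nbr G v i) = (dist u v).-1.
Proof.
move: (ball_dist u v); case E: (dist u v) => [//|k] /ballSP[vB|[w [i [wB ltiw wi_v]]]] _.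
  by have := dist_leq vB; rewrite E ltnn.
exists (eport G w i); first by rewrite -wi_v; apply: eport_lt.
rewrite -wi_v nbr_back //; apply/eqP; rewrite eqn_leq dist_leq //=.
by have := dist_nbr_leq u ltiw; rewrite wi_v E.
Qed.

End Balls.

Section Classes.
Variables (V : finType) (G : pgraph V) (r : V) (d1 d2 : nat).

Local Notation q := (qAL d1 d2).
Local Notation dr := (dist G r).
Local Notation blk := (black G r d1 d2).
Local Notation Bn := (Bnode G r d1 d2).

Lemma modq_lt v : dr v %% q < q.
Proof. by rewrite ltn_mod /qAL addn2. Qed.

Lemma black_at t s v : s < q -> dr v = t * q + s ->
  blk v = [|| s == d2 + 1, s == d1 + d2 + 1, s == 0 | s == 1].
Proof. by move=> ltsq dv; rewrite /black /inA /inB /inC /inD dv modnMDl modn_small. Qed.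

Lemma nbr_not_black_Bnode v i : i < deg G v -> ~~ blk (nbr G v i) -> Bn v = false.
Proof.
move=> ltiv white; apply/negbTE; rewrite negb_and; apply/orP; right.
by apply/allPn; exists i; rewrite // mem_iota.
Qed.

Lemma not_black_Bnode v : ~~ blk v -> Bn v = false.
Proof. by rewrite /Bnode => /negbTE ->. Qed.

Lemma wlsS l k v inp : wls G r d1 d2 l k.+1 v inp =
  if blk v && (k.+1 != l) then ([::], false)
  else scan [seq p <- ports G v | Some p != inp]
         (fun p => let m := wls G r d1 d2 l k (nbr G v p) (Some (eport G v p)) in
                   (p :: m.1 ++ [:: eport G v p], m.2)).
Proof. by []. Qed.

Lemma wlsS_success l k v inp : (wls G r d1 d2 l k.+1 v inp).2 =
  ~~ (blk v && (k.+1 != l)) && has (fun p => (wls G r d1 d2 l k (nbr G v p) (Some (eport G v p))).2)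
                                   [seq p <- ports G v | Some p != inp].
Proof. by rewrite wlsS; case: ifP => //= _; rewrite scan_success. Qed.

Lemma report_test_success y : (report_test G r d1 d2 y).2 =
  blk y && ~~ has (fun p => Bn (nbr G y p)) (ports G y).
Proof. by rewrite /report_test; case: (blk y). Qed.

Hypothesis G_connected : connected G.

Lemma dist_nbr v i : i < deg G v -> dr v <= (dr (nbr G v i)).+1 <= (dr v).+2.
Proof. by move=> ltiv; rewrite dist_leq_nbr //= ltnS dist_nbr_leq. Qed.

Lemma parent_mod v s : dr v %% q = s.+1 -> exists2 i, i < deg G v & dr (nbr G v i) %% q = s.
Proof.
move=> vs; have dv_gt0 : 0 < dr v by rewrite lt0n; apply/eqP => dv0; rewrite dv0 mod0n in vs.
have [i ltiv pi] := dist_parent G_connected dv_gt0; exists i; rewrite // pi.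
have := modq_lt v; rewrite vs => ltsq.
by rewrite (divn_eq (dr v) q) vs addnS /= modnMDl modn_small // ltnW.
Qed.

(* Neighbours of a class-C node lie in classes B, C and D. *)
Lemma C_Bnode v : dr v %% q = 0 -> Bn v.
Proof.
move=> vC; apply/andP; split; first by rewrite /black /inC vC !orbT.
apply/allP => i; rewrite mem_iota => /andP[_ ltiv].
move: (dist_nbr ltiv); set w := nbr G v i.
rewrite (divn_eq (dr v) q) vC addn0; set t := dr v %/ q => /andP[lo hi].
clearbody t.
have [E|[E|E]] : dr w = t * q \/ dr w = t * q + 1 \/ (dr w).+1 = t * q by lia.
- by rewrite (@black_at t 0) ?addn0 ?orbT // /qAL addn2.
- by rewrite (@black_at t 1) ?orbT // /qAL; lia.
- have Ht : dr w = t.-1 * q + (d1 + d2 + 1).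
    by case: t E {lo hi} => [|t'] E; rewrite ?mul0n // mulSn /qAL in E *; lia.
  by rewrite (black_at _ Ht) ?eqxx ?orbT // /qAL; lia.
Qed.

Hypothesis d1_gt1 : 1 < d1.
Hypothesis d1_leq_half_d2 : d1 <= d2./2.

Lemma double_d1_leq_d2 : d1.*2 <= d2.
Proof.
have := d1_leq_half_d2; rewrite -leq_double => /leq_trans; apply.
by rewrite -{2}(odd_double_half d2) leq_addl.
Qed.

Lemma A_not_Bnode v : dr v %% q = d2 + 1 -> Bn v = false.
Proof.
rewrite addn1 => /parent_mod[i ltiv pi]; apply: (nbr_not_black_Bnode ltiv).
have := double_d1_leq_d2; rewrite /black /inA /inB /inC /inD pi; lia.
Qed.

Lemma B_not_Bnode v : dr v %% q = d1 + d2 + 1 -> Bn v = false.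
Proof.
rewrite addn1 => /parent_mod[i ltiv pi]; apply: (nbr_not_black_Bnode ltiv).
have := double_d1_leq_d2; rewrite /black /inA /inB /inC /inD pi; lia.
Qed.

(* Going up from a node at level [d2 + 1 + j] of a period, the search crosses
   white levels and reports a class-A node, which has no B-node neighbour. *)
Lemma wls_succeeds t j v inp : j <= d1 -> dr v = t * q + (d2 + 1 + j) ->
  (inp = None \/ exists2 e, inp = Some e & dr (nbr G v e) = (dr v).+1) ->
  (wls G r d1 d2 d1 j v inp).2.
Proof.
have := double_d1_leq_d2 => d2_big; have q_def : q = d1 + d2 + 2 by [].
elim: j v inp => [|j IH] v inp le_jd1 dv inp_down.
  rewrite /= report_test_success (black_at _ dv) ?addn0 ?eqxx //=; last by lia.
  apply/hasPn => p; rewrite mem_iota => /andP[_ ltpv]; apply/negbT.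
  move: (dist_nbr ltpv); set w := nbr G v p => /andP[lo hi].
  have [E|[E|E]] : dr w = t * q + d2 \/ dr w = t * q + (d2 + 1) \/ dr w = t * q + (d2 + 2).
    by rewrite dv in lo hi; lia.
  - by apply/not_black_Bnode; rewrite (black_at _ E); lia.
  - by apply: A_not_Bnode; rewrite E modnMDl modn_small //; lia.
  - by apply/not_black_Bnode; rewrite (black_at _ E); lia.
rewrite wlsS_success; apply/andP; split.
  by apply/negP => /andP[]; rewrite (black_at _ dv); lia.
have dv_gt0 : 0 < dr v by lia.
have [i ltiv di] := dist_parent G_connected dv_gt0.
apply/hasP; exists i.
  rewrite mem_filter mem_iota leq0n add0n ltiv !andbT.
  case: inp_down => [->//|[e -> de]]; apply/eqP => -[ie].
  by move: di; rewrite ie de; lia.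
apply: IH; first lia.
  by rewrite di dv; lia.
by right; exists (eport G v i); rewrite ?nbr_back // di; lia.
Qed.

(* Started below a class-D node, the search never leaves the white levels
   above it, and the only black nodes it reports are class-D nodes, whose
   parent is a B-node. *)
Lemma wls_fails t k v inp : k < d1 -> t * q + (k == 0) <= dr v <= t * q + 1 + (d1 - k) ->
  (wls G r d1 d2 d1 k v inp).2 = false.
Proof.
have := double_d1_leq_d2 => d2_big; have q_def : q = d1 + d2 + 2 by [].
elim: k v inp => [|k IH] v inp ltkd1 /andP[lo hi].
  rewrite /= report_test_success; case vblack: (blk v) => //=.
  have dv : dr v = t * q + 1.
    have [s ds] : exists s, dr v = t * q + s.+1 by exists (dr v - t * q).-1; lia.
    by move: vblack; rewrite (black_at _ ds); [rewrite ds in lo hi *|]; lia.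
  have [i ltiv pi] : exists2 i, i < deg G v & dr (nbr G v i) %% q = 0.
    by apply: parent_mod; rewrite dv modnMDl modn_small //; lia.
  by apply/negbF/hasP; exists i; rewrite ?mem_iota ?C_Bnode.
rewrite wlsS_success; case vblack: (blk v); first by rewrite /= (_ : k.+1 != d1) //; lia.
apply/negbTE/hasPn => p; rewrite mem_filter mem_iota => /andP[_ /andP[_ ltpv]]; apply/negbT.
have dv_high : 2 <= dr v - t * q.
  by move: vblack; rewrite (@black_at t (dr v - t * q)); lia.
have := dist_nbr ltpv => /andP[lo' hi']; apply: IH; lia.
Qed.

Lemma wls_from_D_fails t x : dr x = t * q + 1 -> (wls G r d1 d2 d1 d1 x None).2 = false.
Proof.
move=> dx; have [k dk] : exists k, d1 = k.+1 by exists d1.-1; lia.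
have -> : wls G r d1 d2 d1 d1 x None = wls G r d1 d2 d1 k.+1 x None by rewrite -dk.
rewrite wlsS_success -dk eqxx andbF /=.
apply/hasPn => p; rewrite mem_filter mem_iota => /andP[_ /andP[_ ltpv]]; apply/negbT.
have := dist_nbr ltpv; rewrite dx => /andP[lo hi].
by apply: (@wls_fails t); lia.
Qed.

Lemma IsB_answer x : [|| inB G r d1 d2 x, inC G r d1 d2 x | inD G r d1 d2 x] ->
  let ans := (IsB G r d1 d2 x).2 in
  (ans = Ans_B <-> inB G r d1 d2 x) /\ (ans = Ans_D <-> inD G r d1 d2 x && ~~ Bn x).
Proof.
rewrite /= IsBE /inB /inC /inD.
have := modq_lt x; have := double_d1_leq_d2 => d2_big ltxq; have q_def : q = d1 + d2 + 2 by [].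
have dx := divn_eq (dr x) q.
case/or3P => /eqP xm; rewrite xm.
- rewrite (B_not_Bnode xm) /= (@wls_succeeds (dr x %/ q)) ?eqxx; last by left.
  + by do 2!split => //; lia.
  + by [].
  + by rewrite {1}dx xm; lia.
- by rewrite (C_Bnode xm); do 2!split => //; lia.
- case: (Bn x); first by do 2!split => //; lia.
  rewrite /= (@wls_from_D_fails (dr x %/ q)); last by rewrite {1}dx xm.
  by do 2!split => //; lia.
Qed.

End Classes.

Lemma size_flatten_map_leq (T : Type) (s : seq nat) (f : nat -> seq T) m :
  (forall p, p \in s -> size (f p) <= m) -> size (flatten (map f s)) <= size s * m.
Proof.
elim: s => //= p s IH fm; rewrite size_cat mulSn leq_add ?fm ?mem_head //.
by apply: IH => p' p's; apply/fm/mem_behead.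
Qed.

Lemma size_scan_leq (ps : seq nat) (f : nat -> seq nat * bool) m :
  (forall p, p \in ps -> size (f p).1 <= m) -> size (scan ps f).1 <= size ps * m.
Proof.
elim: ps => //= p ps IH fm; have fpm := fm p (mem_head _ _).
case: (f p).2 => /=; first by rewrite mulSn (leq_trans fpm) ?leq_addr.
by rewrite size_cat mulSn leq_add // IH // => p' p'ps; apply/fm/mem_behead.
Qed.

Section TraversalLength.
Variables (V : finType) (G : pgraph V) (r : V) (d1 d2 D : nat).
Hypothesis deg_leq : forall v, deg G v <= D.
Hypothesis D_gt1 : 1 < D.

Lemma size_Bnode_test v : size (Bnode_test G r d1 d2 v).1 <= 2 * D.
Proof.
apply: leq_trans (size_flatten_map_leq (m := 2) _) _ => //.
by rewrite size_iota mulnC leq_mul2l deg_leq orbT.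
Qed.

Lemma size_hasBnbr_test v : size (hasBnbr_test G r d1 d2 v).1 <= D * (2 + 2 * D).
Proof.
apply: leq_trans (size_flatten_map_leq (m := 2 + 2 * D) _) _.
  by move=> p _; have := size_Bnode_test (nbr G v p); rewrite /= size_cat /=; lia.
by rewrite size_iota leq_mul2r deg_leq orbT.
Qed.

(* The slack [2 * D] absorbs the two moves per port spent by the level above. *)
Lemma size_wls l k v inp : size (wls G r d1 d2 l k v inp).1 + 2 * D <= 6 * D ^ k.+2.
Proof.
have D_pow_gt0 j : 0 < D ^ j by rewrite expn_gt0; lia.
elim: k v inp => [|k IH] v inp.
  have := size_hasBnbr_test v; rewrite /= /report_test !expnS expn0.
  by case: (black G r d1 d2 v) => /=; nia.
rewrite wlsS; case: (_ && _); first by rewrite /= (expnS D k.+2); have := D_pow_gt0 k.+2; nia.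
set m := 6 * D ^ k.+2 - 2 * D.
have le_m : 2 * D <= 6 * D ^ k.+2 by have := IH v inp; lia.
have : size (scan [seq p <- ports G v | Some p != inp]
  (fun p => let m := wls G r d1 d2 l k (nbr G v p) (Some (eport G v p)) in
            (p :: m.1 ++ [:: eport G v p], m.2))).1 <= D * (2 + m).
  apply: leq_trans (size_scan_leq (m := 2 + m) _) _.
    by move=> p _ /=; rewrite size_cat /=; have := IH (nbr G v p) (Some (eport G v p)); lia.
  rewrite leq_mul2r size_filter (leq_trans (count_size _ _)) ?size_iota ?deg_leq ?orbT //.
rewrite (expnS D k.+2) mulnCA -(subnK le_m) -/m mulnDr; nia.
Qed.

Lemma size_IsB x : size (IsB G r d1 d2 x).1 <= 6 * D ^ (d1 + 2).
Proof.
have := size_Bnode_test x; rewrite /IsB; case: ifP => _ /=.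
  rewrite addn2 expnS; have : 0 < D ^ d1.+1 by rewrite expn_gt0; lia.
  by nia.
by rewrite size_cat; have := size_wls d1 d1 x None; rewrite addn2; lia.
Qed.

End TraversalLength.

(* The middle node of a shortest path of length 2 uses two distinct ports. *)
Lemma maxdeg_gt1 (V : finType) (G : pgraph V) : connected G -> 1 < diam G -> 1 < maxdeg G.
Proof.
move=> G_connected diam_gt1.
have /existsP[u /existsP[v duv]] : [exists u, exists v, 1 < dist G u v].
  apply: contraLR diam_gt1; rewrite -leqNgt negb_exists => /forallP far.
  apply/bigmax_leqP => u _; apply/bigmax_leqP => v _.
  by move: (far u); rewrite negb_exists => /forallP /(_ v); rewrite -leqNgt.
have [i ltiv di] := dist_parent G_connected (ltnW duv); set w := nbr G v i in di.
have [j ltjw dj] : exists2 j, j < deg G w & dist G u (nbr G w j) = (dist G u w).-1.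
  by apply: dist_parent; rewrite // di; lia.
have ltew := eport_lt ltiv; have wv := nbr_back ltiv.
have ne_je : j != eport G v i by apply/eqP => je; move: dj; rewrite je -/w wv di; lia.
have w_deg : 1 < deg G w by move: ltjw ltew ne_je; rewrite -/w; lia.
by apply: leq_trans w_deg _; rewrite /maxdeg (bigD1 w) //= leq_maxl.
Qed.

Section Runs.
Variables (V : finType) (G : pgraph V) (col : V -> bool) (R : robot) (bound : nat).

(* Started at [v], entered through [i], with memory [s], the robot takes
   exactly the exits [ms], reaching [v'] entered through [i'] with memory
   [s'], and meanwhile never holds more than [bound] bits. *)
Definition reaches (v : V) (i : option nat) (s : nat) (ms : seq nat)
    (v' : V) (i' : option nat) (s' : nat) : Prop :=
  walk_end G v ms = v' /\
  forall f, let: (ms', o, w, b') := run G col R f v' i' s' in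
    exists2 b, b <= bound & run G col R (size ms + f) v i s = (ms ++ ms', o, w, maxn b b').

Lemma reaches_nil v i s : reaches v i s [::] v i s.
Proof. by split => // f /=; case: run => [[[ms o] w] b]; exists 0; rewrite ?max0n. Qed.

Lemma reaches_cat v1 i1 s1 ms1 v2 i2 s2 ms2 v3 i3 s3 :
  reaches v1 i1 s1 ms1 v2 i2 s2 -> reaches v2 i2 s2 ms2 v3 i3 s3 ->
  reaches v1 i1 s1 (ms1 ++ ms2) v3 i3 s3.
Proof.
move=> [end1 run1] [end2 run2]; split.
  by move: end1 end2; rewrite /walk_end foldl_cat => -> ->.
move=> f; move: (run1 (size ms2 + f)) (run2 f).
case: (run _ _ _ f v3 i3 s3) => [[[ms o] w] b] /=.
case: run => [[[ms' o'] w'] b'] [b1 le_b1 E1] [b2 le_b2 E2].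
rewrite size_cat -addnA E1; case: E2 => -> -> -> ->.
by exists (maxn b1 b2); rewrite ?geq_max ?le_b1 // catA maxnA.
Qed.

Lemma reaches_move v i s s' p :
  rstep R s (deg G v) (col v) i = (s', Move p) -> p < deg G v -> bits s <= bound ->
  reaches v i s [:: p] (nbr G v p) (Some (eport G v p)) s'.
Proof.
move=> step ltpv small; split => // f /=.
by rewrite step /= ltpv; case: run => [[[ms o] w] b]; exists (bits s).
Qed.

Lemma run_halt v i s s' a :
  rstep R s (deg G v) (col v) i = (s', Halt a) ->
  run G col R 1 v i s = ([::], Some a, v, maxn (bits s) (bits s')).
Proof. by move=> step; rewrite /= step. Qed.

End Runs.

Section Simulation.
Variables (V : finType) (G : pgraph V) (r : V) (d1 d2 D : nat).
Hypothesis deg_leq : forall v, deg G v <= D.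
Hypothesis D_gt1 : 1 < D.
Hypothesis d1_gt1 : 1 < d1.

Local Notation col := (black G r d1 d2).
Local Notation R := (IsB_robot d1).
Local Notation nb := (nbr G).
Local Notation ep := (eport G).
Local Notation dg := (deg G).

Definition mem_bound : nat := 30 * d1 * up_log 2 D.

Definition port_stack (stk : seq nat) : bool := all (fun e => e < D) stk && (size stk <= d1).

Definition small_phase (s : phase) : bool :=
  (match s with OutW _ _ e _ | AtW _ _ e _ => e < D | _ => true end) &&
  port_stack (phase_stack s).

Lemma bits_small_phase s : small_phase s -> bits (encode_seq (phase_code s)) <= mem_bound.
Proof.
move=> /andP[small_e /andP[stk_lt stk_size]].
have header_lt : all (fun e => e < 16 * D) (phase_header s).
  by case: s small_e {stk_lt stk_size} => [|[]|[]|?|[] ?|[] ?|[] [] ? ?|[] [] ? ?|[] ?] /=; lia.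
have code_lt : all (fun e => e < 16 * D) (phase_code s).
  by rewrite all_cat header_lt; apply: sub_all stk_lt => e /= /leq_trans; apply; lia.
have width := digit_width_le code_lt.
have width_le : up_log 2 (16 * D) <= 4 + up_log 2 D.
  by apply: up_log_min => //; rewrite expnD leq_mul2l up_logP.
have log_gt0 : 0 < up_log 2 D by rewrite up_log_gt0.
have size_code : size (phase_code s) <= d1 + 4 by rewrite size_phase_code; lia.
apply: leq_trans (bits_encode_seq _) _; rewrite /mem_bound.
move: size_code width width_le log_gt0.
set n := size _; set w := digit_width _; set L := up_log 2 D; nia.
Qed.

Definition reaches_phase v i s ms v' i' s' :=
  reaches G col R mem_bound v i (encode_seq (phase_code s)) ms v' i' (encode_seq (phase_code s')).

Lemma reaches_phase_move v i s s' p :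
  IsB_step d1 s (dg v) (col v) i = (s', Move p) -> p < dg v -> small_phase s ->
  reaches_phase v i s [:: p] (nb v p) (Some (ep v p)) s'.
Proof.
move=> step ltpv small; apply: reaches_move => //; last exact: bits_small_phase.
by rewrite /= load_phaseK step.
Qed.

Lemma reaches_phase_back v i s s' : i < dg v -> small_phase s ->
  IsB_step d1 s (dg (nb v i)) (col (nb v i)) (Some (ep v i)) = (s', Move (ep v i)) ->
  reaches_phase (nb v i) (Some (ep v i)) s [:: ep v i] v (Some i) s'.
Proof.
move=> ltiv small step; have := reaches_phase_move step (eport_lt ltiv) small.
by rewrite nbr_back // eport_back.
Qed.

Lemma port_ltD v p : p < dg v -> p < D.
Proof. by move=> ltpv; apply: leq_trans ltpv (deg_leq v). Qed.

Lemma port_stack_cons e stk : e < D -> port_stack stk -> size stk < d1 -> port_stack (e :: stk).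
Proof. by move=> lteD /andP[stk_lt _] stk_size; rewrite /port_stack /= lteD stk_lt. Qed.

(* The robot at [u] sends a traversal [T i] through every port [i] in turn:
   [start a] launches the traversal through port [i], which comes back to
   [u] in phase [back (upd a i)], and [back] moves on to port [i.+1]. *)
Lemma reaches_port_loop (u : V) (A : Type) (start back : A -> phase) (upd : A -> nat -> A)
    (T : nat -> seq nat) :
  (forall a i, i < dg u ->
     reaches_phase (nb u i) (Some (ep u i)) (start a) (T i) u (Some i) (back (upd a i))) ->
  (forall a i, i.+1 < dg u ->
     IsB_step d1 (back a) (dg u) (col u) (Some i) = (start a, Move i.+1)) ->
  (forall a, small_phase (back a)) ->
  forall n i a, i + n.+1 = dg u ->
  reaches_phase (nb u i) (Some (ep u i)) (start a)
    (T i ++ flatten [seq j :: T j | j <- iota i.+1 n])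
    u (Some (dg u).-1) (back (foldl upd a (iota i n.+1))).
Proof.
move=> traverse next small; elim=> [|n IH] i a last_i.
  by rewrite /= cats0 (_ : (dg u).-1 = i); [apply: traverse|]; lia.
have ltiu : i.+1 < dg u by lia.
exact: reaches_cat (traverse a i (ltnW ltiu))
  (reaches_cat (reaches_phase_move (next (upd a i) i ltiu) ltiu (small _))
               (IH i.+1 (upd a i) ltac:(lia))).
Qed.

Lemma reaches_Bnode_test x a : 0 < dg x ->
  reaches_phase (nb x 0) (Some (ep x 0)) (OutX a)
    (behead (Bnode_test G r d1 d2 x).1) x (Some (dg x).-1)
    (AtX (a && all (fun j => col (nb x j)) (ports G x))).
Proof.
move=> deg_gt0.
have back a' i : i < dg x -> reaches_phase (nb x i) (Some (ep x i)) (OutX a') [:: ep x i]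
    x (Some i) (AtX (a' && col (nb x i))).
  by move=> ltix; apply: reaches_phase_back.
have next a' i : i.+1 < dg x -> IsB_step d1 (AtX a') (dg x) (col x) (Some i) = (OutX a', Move i.+1).
  by move=> ltix; rewrite /= ltix.
have := @reaches_port_loop x _ OutX AtX (fun a j => a && col (nb x j)) (fun j => [:: ep x j])
  back next (fun _ => isT) (dg x).-1 0 a ltac:(lia).
by rewrite foldl_andb /Bnode_test /ports (iota0S deg_gt0) /= andbA.
Qed.

Lemma reaches_Bnode_test_nbr y p h stk : p < dg y -> port_stack stk ->
  reaches_phase (nb y p) (Some (ep y p)) (OutY h stk)
    ((Bnode_test G r d1 d2 (nb y p)).1 ++ [:: ep y p])
    y (Some p) (AtY (h || Bnode G r d1 d2 (nb y p)) stk).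
Proof.
move=> ltpy stk_ok; have ltew := eport_lt ltpy; set w := nb y p in ltew *.
have deg_gt0 : 0 < dg w by lia.
have small a : small_phase (OutW h a (ep y p) stk) && small_phase (AtW h a (ep y p) stk).
  by rewrite /small_phase /= (port_ltD ltew) stk_ok.
have out : reaches_phase w (Some (ep y p)) (OutY h stk) [:: 0] (nb w 0) (Some (ep w 0))
    (OutW h (col w) (ep y p) stk) by apply: reaches_phase_move.
have back a i : i < dg w -> reaches_phase (nb w i) (Some (ep w i)) (OutW h a (ep y p) stk)
    [:: ep w i] w (Some i) (AtW h (a && col (nb w i)) (ep y p) stk).
  by move=> ltiw; apply: reaches_phase_back => //; case/andP: (small a).
have next a i : i.+1 < dg w ->
    IsB_step d1 (AtW h a (ep y p) stk) (dg w) (col w) (Some i) = (OutW h a (ep y p) stk, Move i.+1).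
  by move=> ltiw; rewrite /= ltiw.
have loop := @reaches_port_loop w _ (fun a => OutW h a (ep y p) stk) (fun a => AtW h a (ep y p) stk)
  (fun a j => a && col (nb w j)) (fun j => [:: ep w j])
  back next (fun a => proj2 (andP (small a))) (dg w).-1 0 (col w) ltac:(lia).
have home a : reaches_phase w (Some (dg w).-1) (AtW h a (ep y p) stk) [:: ep y p]
    y (Some p) (AtY (h || a) stk).
  have := @reaches_phase_move w (Some (dg w).-1) (AtW h a (ep y p) stk) (AtY (h || a) stk) _ _ ltew
    (proj2 (andP (small a))).
  by rewrite /w nbr_back // eport_back //; apply; rewrite /= prednK // ltnn.
have := reaches_cat out (reaches_cat loop (home _)).
by rewrite foldl_andb prednK // /Bnode_test /Bnode /ports (iota0S deg_gt0) /=.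
Qed.

Lemma reaches_hasBnbr_test y h stk : 0 < dg y -> port_stack stk ->
  reaches_phase (nb y 0) (Some (ep y 0)) (OutY h stk)
    (behead (hasBnbr_test G r d1 d2 y).1) y (Some (dg y).-1)
    (AtY (h || (hasBnbr_test G r d1 d2 y).2) stk).
Proof.
move=> deg_gt0 stk_ok.
have next h' i : i.+1 < dg y ->
    IsB_step d1 (AtY h' stk) (dg y) (col y) (Some i) = (OutY h' stk, Move i.+1).
  by move=> ltiy; rewrite /= ltiy.
have := @reaches_port_loop y _ (fun h => OutY h stk) (fun h => AtY h stk)
  (fun h j => h || Bnode G r d1 d2 (nb y j))
  (fun j => (Bnode_test G r d1 d2 (nb y j)).1 ++ [:: ep y j])
  (fun h i ltiy => reaches_Bnode_test_nbr h ltiy stk_ok) next (fun _ => stk_ok)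
  (dg y).-1 0 h ltac:(lia).
by rewrite foldl_orb prednK // /hasBnbr_test /ports (iota0S deg_gt0).
Qed.

Definition wls_branch k u p : seq nat * bool :=
  let m := wls G r d1 d2 d1 k (nb u p) (Some (ep u p)) in (p :: m.1 ++ [:: ep u p], m.2).

Lemma wlsS_free k v inp : wls G r d1 d2 d1 k.+1 v inp =
  if col v && (k.+1 != d1) then ([::], false) else scan (free_ports inp (dg v) 0) (wls_branch k v).
Proof. by rewrite wlsS /free_ports subn0. Qed.

Lemma scan_branch_head k u p l :
  (scan (p :: l) (wls_branch k u)).1 = p :: behead (scan (p :: l) (wls_branch k u)).1.
Proof. by rewrite /=; case: (_.2). Qed.

(* A search call of depth [k] entered from the port [e] of the node above
   it, with [stk] the ports leading back to [x], returns through [e] in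
   phase [Up], carrying the outcome of the call. *)
Definition wls_simulated k : Prop :=
  forall v e stk, size stk + 1 + k = d1 -> e < dg v -> port_stack stk ->
  reaches_phase v (Some e) (Down stk) ((wls G r d1 d2 d1 k v (Some e)).1 ++ [:: e])
    (nb v e) (Some (ep v e)) (Up (wls G r d1 d2 d1 k v (Some e)).2 stk).

Lemma scan_simulated u stku k : size stku + 1 + k = d1 -> port_stack stku -> wls_simulated k ->
  forall l p i, free_ports (ohead stku) (dg u) i = p :: l ->
  exists pl, reaches_phase (nb u p) (Some (ep u p)) (Down stku)
               (behead (scan (p :: l) (wls_branch k u)).1)
               u (Some pl) (Up (scan (p :: l) (wls_branch k u)).2 stku) /\
             IsB_step d1 (Up (scan (p :: l) (wls_branch k u)).2 stku) (dg u) (col u) (Some pl) =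
             ascend (scan (p :: l) (wls_branch k u)).2 stku.
Proof.
move=> sized stk_ok sim; elim=> [|p' l IH] p i /free_ports_cons[ltpu _ def_l].
  have := sim (nb u p) (ep u p) stku sized (eport_lt ltpu) stk_ok.
  rewrite nbr_back // eport_back // => call; exists p; rewrite /= /wls_branch /=.
  by case: (_.2) call => call; rewrite ?cats0 //= /next_port -def_l.
have := sim (nb u p) (ep u p) stku sized (eport_lt ltpu) stk_ok.
rewrite nbr_back // eport_back // => call.
have [ltp'u _ _] := free_ports_cons (esym def_l).
rewrite /= /wls_branch /=; case found: (wls _ _ _ _ _ _ _ _).2 call => call.
  by exists p.
have up : IsB_step d1 (Up false stku) (dg u) (col u) (Some p) = (Down stku, Move p').
  by rewrite /= /next_port -def_l.
have [pl [rest done]] := IH p' p.+1 (esym def_l); exists pl; split => //.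
have := reaches_cat call (reaches_cat (reaches_phase_move up ltp'u stk_ok) rest).
by rewrite -/(wls_branch k u) (scan_branch_head k u p' l) /= -catA.
Qed.

Lemma wls_simulated0 : wls_simulated 0.
Proof.
move=> v e stk sized ltev stk_ok; have deg_gt0 : 0 < dg v by lia.
have stk_ok' : port_stack (e :: stk) by apply: port_stack_cons; rewrite ?(port_ltD ltev) //; lia.
have last_level : size stk + 1 == d1 by apply/eqP; lia.
rewrite /= /report_test; case vblack: (col v); last first.
  by apply: reaches_phase_move => //; rewrite /= last_level vblack.
have down : IsB_step d1 (Down stk) (dg v) (col v) (Some e) = (OutY false (e :: stk), Move 0).
  by rewrite /= last_level vblack.
have up : IsB_step d1 (AtY (false || (hasBnbr_test G r d1 d2 v).2) (e :: stk)) (dg v) (col v)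
    (Some (dg v).-1) = (Up (~~ (hasBnbr_test G r d1 d2 v).2) stk, Move e).
  by rewrite /= prednK // ltnn.
have := reaches_cat (reaches_phase_move down deg_gt0 stk_ok)
  (reaches_cat (reaches_hasBnbr_test false deg_gt0 stk_ok') (reaches_phase_move up ltev stk_ok')).
by rewrite /hasBnbr_test /ports (iota0S deg_gt0).
Qed.

Lemma wls_simulatedS k : wls_simulated k -> wls_simulated k.+1.
Proof.
move=> IH v e stk sized ltev stk_ok; rewrite wlsS_free.
have not_last : (size stk + 1 == d1) = false by apply/eqP; lia.
case vblack: (col v) => /=.
  rewrite (_ : k.+1 != d1); last by apply/eqP; lia.
  by apply: reaches_phase_move; rewrite // /= not_last vblack.
case free: (free_ports (Some e) (dg v) 0) => [|p l].
  by apply: reaches_phase_move; rewrite // /= not_last vblack /next_port free.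
have down : IsB_step d1 (Down stk) (dg v) (col v) (Some e) = (Down (e :: stk), Move p).
  by rewrite /= not_last vblack /next_port free.
have [ltpv _ _] := free_ports_cons free.
have stk_ok' : port_stack (e :: stk) by apply: port_stack_cons; rewrite ?(port_ltD ltev) //; lia.
have [pl [search ret]] :=
  @scan_simulated v (e :: stk) k ltac:(rewrite /=; lia) stk_ok' IH l p 0 free.
have up : IsB_step d1 (Up (scan (p :: l) (wls_branch k v)).2 (e :: stk)) (dg v) (col v) (Some pl) =
    (Up (scan (p :: l) (wls_branch k v)).2 stk, Move e) by rewrite ret.
have := reaches_cat (reaches_phase_move down ltpv stk_ok)
  (reaches_cat search (reaches_phase_move up ltev stk_ok')).
by rewrite (scan_branch_head k v p l) /= -catA.
Qed.

Lemma wls_simulation k : wls_simulated k.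
Proof. by elim: k => [|k IH]; [exact: wls_simulated0 | exact: wls_simulatedS]. Qed.

Lemma wls_top_scan x k : d1 = k.+1 ->
  wls G r d1 d2 d1 d1 x None = scan (free_ports None (dg x) 0) (wls_branch k x).
Proof. by move=> dk; rewrite {3}dk wlsS_free -dk eqxx andbF. Qed.

Lemma reaches_search x : 0 < dg x -> exists i,
  let m := wls G r d1 d2 d1 d1 x None in
  reaches_phase x (Some (dg x).-1) (AtX false) m.1 x (Some i) (Up m.2 [::]) /\
  IsB_step d1 (Up m.2 [::]) (dg x) (col x) (Some i) = ascend m.2 [::].
Proof.
move=> deg_gt0; have [k dk] : exists k, d1 = k.+1 by exists d1.-1; lia.
have start : IsB_step d1 (AtX false) (dg x) (col x) (Some (dg x).-1) = (Down [::], Move 0).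
  by rewrite /IsB_step prednK // ltnn.
have free_x : free_ports None (dg x) 0 = 0 :: iota 1 (dg x).-1.
  by rewrite /free_ports subn0 (iota0S deg_gt0) /= filter_predT.
have [i [search finish]] :=
  @scan_simulated x [::] k ltac:(rewrite /=; lia) isT (@wls_simulation k) _ 0 0 free_x.
exists i; rewrite (wls_top_scan x dk) free_x; split => //.
have := reaches_cat (reaches_phase_move start deg_gt0 isT) search.
by rewrite (scan_branch_head k x 0).
Qed.

Lemma IsB_simulation x : exists i s s',
  [/\ reaches G col R mem_bound x None 0 (IsB G r d1 d2 x).1 x i s,
      rstep R s (dg x) (col x) i = (s', Halt (IsB G r d1 d2 x).2),
      bits s <= mem_bound & bits s' <= mem_bound].
Proof.
case: (posnP (dg x)) => [deg0|deg_gt0].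
  have [k dk] : exists k, d1 = k.+1 by exists d1.-1; lia.
  have -> : IsB G r d1 d2 x = ([::], if col x then Ans_Bnode else Ans_D).
    by rewrite IsBE (wls_top_scan x dk) /Bnode_test /Bnode /free_ports /ports deg0; case: (col x).
  exists None, 0, (encode_seq (phase_code Start)); split.
  - exact: reaches_nil.
  - by rewrite /rstep /IsB_robot /load_phase eqxx /IsB_step deg0.
  - by [].
  - exact: bits_small_phase.
have start : reaches G col R mem_bound x None 0 [:: 0] (nb x 0) (Some (ep x 0))
    (encode_seq (phase_code (OutX (col x)))).
  by apply: reaches_move => //; rewrite /rstep /IsB_robot /load_phase eqxx /IsB_step deg_gt0.
have test := reaches_cat start (reaches_Bnode_test (col x) deg_gt0).
rewrite -/(Bnode G r d1 d2 x) in test.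
have test_trace : [:: 0] ++ behead (Bnode_test G r d1 d2 x).1 = (Bnode_test G r d1 d2 x).1.
  by rewrite /Bnode_test /ports (iota0S deg_gt0).
rewrite test_trace in test; rewrite IsBE; case: (Bnode G r d1 d2 x) test => test.
  exists (Some (dg x).-1), (encode_seq (phase_code (AtX true))), (encode_seq (phase_code Start)).
  split; [exact: test|by rewrite /rstep /IsB_robot load_phaseK /IsB_step prednK // ltnn|..];
    exact: bits_small_phase.
have [i [search finish]] := reaches_search deg_gt0.
set found := (wls _ _ _ _ _ _ _ _).2 in search finish *.
exists (Some i), (encode_seq (phase_code (Up found [::]))), (encode_seq (phase_code Start)).
split; [exact: reaches_cat test search|by rewrite /rstep /IsB_robot load_phaseK finish|..];
  exact: bits_small_phase.
Qed.

End Simulation.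

Theorem lemma2 :
  exists c : nat, forall d1 : nat, 2 <= d1 ->
  exists R : robot,
  forall (d2 : nat) (V : finType) (G : pgraph V) (r x : V),
    d1 <= d2./2 ->
    connected G ->
    d1 + d2 + 1 <= diam G ->
    black G r d1 d2 x ->
    [|| inB G r d1 d2 x, inC G r d1 d2 x | inD G r d1 d2 x] ->
    let ms := (IsB G r d1 d2 x).1 in
    let ans := (IsB G r d1 d2 x).2 in
    (ans = Ans_B <-> inB G r d1 d2 x) /\
    (ans = Ans_D <-> inD G r d1 d2 x && ~~ Bnode G r d1 d2 x) /\
    walk_end G x ms = x /\
    size ms <= c * maxdeg G ^ (d1 + 2) /\
    (exists fuel b,
       run G (black G r d1 d2) R fuel x None 0 = (ms, Some ans, x, b) /\
       b <= c * d1 * up_log 2 (maxdeg G)).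
Proof.
exists 30 => d1 d1_gt1; exists (IsB_robot d1) => d2 V G r x d1_leq G_conn diam_big _ x_BCD ms ans.
have deg_leq v : deg G v <= maxdeg G by rewrite /maxdeg (bigD1 v) //= leq_maxl.
have D_gt1 : 1 < maxdeg G by apply: maxdeg_gt1 => //; apply: leq_trans diam_big; lia.
have [answer_B answer_D] := IsB_answer G_conn d1_gt1 d1_leq x_BCD.
have [i [s [s' [[walk_back run_ms] halt bits_s bits_s']]]] :=
  IsB_simulation r d2 deg_leq D_gt1 d1_gt1 x.
do 3!split => //; split.
  by apply: leq_trans (size_IsB r d1 d2 deg_leq D_gt1 x) _; rewrite leq_mul2r; lia.
have := run_ms 1; rewrite (run_halt halt) => -[b le_b run_E].
exists (size ms + 1), (maxn b (maxn (bits s) (bits s'))).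
by rewrite run_E cats0 !geq_max le_b bits_s bits_s'.
Qed.
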